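(* Let $s\in\{1,2\}$, let $k,l\ge 0$ be integers, and let $\mathcal Q(k,l,1,s,1)$ be the set of lattice paths with steps $(1,1)$ (up), $(s,0)$ (flat) and $(1,-1)$ (down), starting at $(0,0)$, having exactly $k+1$ up steps, $k$ down steps and $l$ flat steps (so ending at $(2k+sl+1,1)$). Then (whenever the denominators are nonzero): (1) For each $i=1,\dots,k+1$, the number of such paths that start with an up step and have exactly $i$ up steps starting on or below the $x$-axis is $\frac{1}{k+1}\binom{2k+l}{2k}\binom{2k}{k}$. (2) For each $i=1,\dots,k$, the number of such paths that start with a down step and have exactly $i$ down steps starting on or below the $x$-axis is $\frac1k\binom{2k+l}{2k}\binom{2k}{k-1}$. (3) For each $i=1,\dots,l$, the number of such paths that start with a flat step and have exactly $i$ flat steps starting on or below the $x$-axis is $\frac1l\binom{2k+l}{k}\binom{k+l}{k+1}$. (4) For each $i=1,\dots,k+l+1$, the number of such paths that start with an up or flat step and have exactly $i$ up-or-flat steps starting on or below the $x$-axis is $\frac{1}{k+l+1}\binom{2k+l}{k}\binom{k+l+1}{k+1}$. (5) For each $i=1,\dots,k+l$, the number of such paths that start with a down or flat step and have exactly $i$ down-or-flat steps starting on or below the $x$-axis is $\frac{1}{k+l}\binom{2k+l}{k+1}\binom{k+l}{k}$. (6) For each $i=1,\dots,2k+1$, the number of such paths that start with an up or down step and have exactly $i$ up-or-down steps starting on or below the $x$-axis is $\frac{1}{2k+1}\binom{2k+l}{2k}\binom{2k+1}{k}$. (7) For each $i=1,\dots,2k+l+1$, the number of such paths with exactly $i$ vertices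 on or below the $x$-axis is $\frac{1}{2k+l+1}\binom{2k+l+1}{2k+1}\binom{2k+1}{k}$.
   Context: A step starts on or below the $x$-axis if its initial vertex has $y$-coordinate $\le 0$; a vertex is on or below the $x$-axis if its $y$-coordinate is $\le 0$ (the final vertex, at height $1$, is never counted). *)

From mathcomp Require Import all_boot all_order all_algebra.
Set Implicit Arguments. Unset Strict Implicit. Unset Printing Implicit Defensive.
Import Order.TTheory GRing.Theory Num.Theory.

Inductive step := U | F | D.

Local Open Scope ring_scope.

Definition step_vec (s : nat) (a : step) : int * int :=
  match a with
  | U => (1, 1)
  | F => (s%:Z, 0)
  | D => (1, -1)
  end.

Fixpoint vertices_from (s : nat) (v : int * int) (p : seq step) : seq (int * int) :=
  match p with
  | [::] => [:: v]
  | a :: q => v :: vertices_from s (v.1 + (step_vec s a).1, v.2 + (step_vec s a).2) q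
  end.

Definition vertices (s : nat) (p : seq step) := vertices_from s (0, 0) p.

Fixpoint all_words (n : nat) : seq (seq step) :=
  match n with
  | 0%N => [:: [::]]
  | n'.+1 => [seq a :: w | a <- [:: U; F; D], w <- all_words n']
  end.

Definition isU (a : step) : bool := if a is U then true else false.
Definition isF (a : step) : bool := if a is F then true else false.
Definition isD (a : step) : bool := if a is D then true else false.

(* Q(k,l,1,s,1): paths from (0,0) with k+1 up, k down, l flat steps.
   (A path is identified with its sequence of steps; the flat length s only
   affects x-coordinates.) *)
Definition Qpaths (k l : nat) : seq (seq step) :=
  [seq p <- all_words (2 * k + l + 1)
   | [&& count isU p == k.+1, count isD p == k & count isF p == l]].

Definition starts_with (C : step -> bool) (p : seq step) : bool :=
  if p is a :: _ then C a else false.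

Definition low_steps (s : nat) (C : step -> bool) (p : seq step) : nat :=
  count (fun av : step * (int * int) => C av.1 && (av.2.2 <= 0))
        (zip p (vertices s p)).

(* number of vertices with y-coordinate <= 0, the final vertex excluded *)
Definition low_vertices (s : nat) (p : seq step) : nat :=
  count (fun v : int * int => v.2 <= 0) (belast (0, 0) (behead (vertices s p))).

Definition nb_low (s k l : nat) (C : step -> bool) (i : nat) : nat :=
  count (fun p => starts_with C p && (low_steps s C p == i)) (Qpaths k l).

Definition nb_low_vertices (s k l i : nat) : nat :=
  count (fun p => low_vertices s p == i) (Qpaths k l).

From HB Require Import structures.
From mathcomp Require Import all_boot all_order all_algebra.
From mathcomp Require Import zify ring lra.
Set Implicit Arguments.
Unset Strict Implicit.
Unset Printing Implicit Defensive.
Import Order.TTheory GRing.Theory Num.Theory.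
Local Open Scope ring_scope.

(* Cycle lemma.  Every path of Q(k,l,1,s,1) ends at height 1, and the set of
   such paths is closed under cyclic rotation of the step word.  Fix a class C
   of steps, occurring m times in each path.  Order the positions of a path by
   height, ties broken by decreasing index: the rotation starting at position j
   has as low steps exactly the positions not above j.  Hence, over the m
   rotations starting with a C-step, the number of low C-steps takes each value
   1, ..., m exactly once.  Counting pairs (path, rotation) gives
   n * #{paths with i low C-steps} = |Q| with n = 2k+l+1, and every formula of
   the statement equals |Q| / n = (2k+l)! / ((k+1)! k! l!). *)

Definition step_eqb (a b : step) : bool :=
  match a, b with U, U | F, F | D, D => true | _, _ => false end.

Lemma step_eqP : Equality.axiom step_eqb.
Proof. by case; case; constructor. Qed.

HB.instance Definition _ := hasDecEq.Build step step_eqP.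

Definition step_dy (a : step) : int := match a with U => 1 | F => 0 | D => -1 end.

Definition height (p : seq step) (t : nat) : int := \sum_(a <- take t p) step_dy a.

Definition low_count (C : step -> bool) (p : seq step) : nat :=
  count (fun t => C (nth U p t) && (height p t <= 0)) (iota 0 (size p)).

Lemma height0 p : height p 0 = 0.
Proof. by rewrite /height take0 big_nil. Qed.

Lemma height_cons a p t : height (a :: p) t.+1 = step_dy a + height p t.
Proof. by rewrite /height /= big_cons. Qed.

Lemma heightD p t r : height p (t + r) = height p t + height (drop t p) r.
Proof. by rewrite /height takeD big_cat. Qed.

Lemma low_steps_from s C p (v : int * int) :
  count (fun av : step * (int * int) => C av.1 && (av.2.2 <= 0))
        (zip p (vertices_from s v p)) =
  count (fun t => C (nth U p t) && (v.2 + height p t <= 0)) (iota 0 (size p)).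
Proof.
elim: p v => [|a p IHp] v //=.
rewrite IHp -[1%N]/(1 + 0)%N iotaDl count_map height0 addr0; congr (_ + _).
apply: eq_count => t /=; rewrite height_cons addrA.
by case: a.
Qed.

Lemma low_stepsE s C p : low_steps s C p = low_count C p.
Proof.
rewrite /low_steps /vertices low_steps_from.
by apply: eq_count => t /=; rewrite add0r.
Qed.

Lemma belast_vertices_from s v p :
  belast v (behead (vertices_from s v p)) =
  map snd (zip p (vertices_from s v p)).
Proof.
elim: p v => [|a p IHp] v //=.
by case: p IHp => [|b p] IHp //=; rewrite IHp.
Qed.

Lemma low_verticesE s p : low_vertices s p = low_count predT p.
Proof.
rewrite /low_vertices /vertices belast_vertices_from count_map.
by rewrite -(low_stepsE s); apply: eq_count.
Qed.

Lemma scaled_le_ge (a b : int) (t j N : nat) : (j <= t < N)%N ->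
  (a * N%:Z - t%:Z <= b * N%:Z - j%:Z) = (a <= b).
Proof.
case/andP=> jt tN; apply/idP/idP => h.
- apply: contraTT h; rewrite -!ltNge => h.
  have : (a - b - 1) * N%:Z >= 0 by nia.
  nia.
- have : (a - b) * N%:Z <= 0 by nia.
  nia.
Qed.

Lemma scaled_le_lt (a b : int) (t j N : nat) : (t < j < N)%N ->
  (a * N%:Z - t%:Z <= b * N%:Z - j%:Z) = (a < b).
Proof.
case/andP=> tj jN; apply/idP/idP => h.
- apply: contraTT h; rewrite -!leNgt => h.
  have : (a - b) * N%:Z >= 0 by nia.
  nia.
- have : (a - b + 1) * N%:Z <= 0 by nia.
  nia.
Qed.

Lemma scaled_inj (a b : int) (t j N : nat) : (t < N)%N -> (j < N)%N ->
  a * N%:Z - t%:Z = b * N%:Z - j%:Z -> t = j.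
Proof.
move=> tN jN e.
have [lt_ab|[lt_ba|eq_ab]] : a < b \/ b < a \/ a = b by lia.
- have : (a - b + 1) * N%:Z <= 0 by nia.
  nia.
- have : (b - a + 1) * N%:Z <= 0 by nia.
  nia.
- by move: e; rewrite eq_ab; lia.
Qed.

(* The lexicographic order on (height, - index), as a single integer. *)
Definition rot_key (p : seq step) (t : nat) : int :=
  height p t * (size p).+1%:Z - t%:Z.

Lemma count_rot (T : Type) (a : pred T) n s : count a (rot n s) = count a s.
Proof. by rewrite /rot count_cat addnC -count_cat cat_take_drop. Qed.

Lemma nth_rot_drop p j r : (r < size p - j)%N ->
  nth U (rot j p) r = nth U p (j + r).
Proof. by move=> hr; rewrite /rot nth_cat size_drop hr nth_drop. Qed.

Lemma nth_rot_take p j r : (r < j <= size p)%N ->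
  nth U (rot j p) (size p - j + r) = nth U p r.
Proof.
case/andP=> hr hj; rewrite /rot nth_cat size_drop ltnNge leq_addr /=.
by rewrite addKn nth_take.
Qed.

Lemma height_rot_drop p j r : (r <= size p - j)%N ->
  height (rot j p) r = height p (j + r) - height p j.
Proof.
move=> hr; rewrite heightD /height /rot takel_cat ?size_drop //.
by rewrite addrC addKr.
Qed.

Lemma height_rot_take p j r : (r <= j <= size p)%N ->
  height (rot j p) (size p - j + r) =
  \sum_(a <- p) step_dy a - height p j + height p r.
Proof.
case/andP=> hr hj; rewrite /height /rot takeD take_size_cat ?size_drop //.
rewrite drop_size_cat ?size_drop // take_takel // big_cat /=.
have -> : \sum_(a <- p) step_dy a = height p j + \sum_(a <- drop j p) step_dy a.
  by rewrite -big_cat cat_take_drop.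
by rewrite /height; ring.
Qed.

Lemma low_count_rot C p j : \sum_(a <- p) step_dy a = 1 -> (j < size p)%N ->
  low_count C (rot j p) =
  count (fun t => C (nth U p t) && (rot_key p t <= rot_key p j)) (iota 0 (size p)).
Proof.
move=> sum1 jn; rewrite /low_count size_rot.
set n := size p.
have split_iota : iota 0 n = iota 0 (n - j) ++ iota (n - j) j.
  by rewrite -iotaD subnK // ltnW.
have rot_iota : rot j (iota 0 n) = iota j (n - j) ++ iota 0 j.
  by rewrite /rot drop_iota take_iota add0n (minn_idPl (ltnW jn)).
symmetry; rewrite -(count_rot _ j (iota 0 n)) rot_iota split_iota !count_cat.
congr (_ + _).
- rewrite -[j in iota j _]addn0 iotaDl count_map; apply: eq_in_count => r.
  rewrite mem_iota add0n => /andP [_ hr] /=.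
  rewrite nth_rot_drop // height_rot_drop ?(ltnW hr) // subr_le0 /rot_key.
  by rewrite scaled_le_ge // leq_addr /= -/n; lia.
- rewrite -[X in _ = count _ (iota X _)]addn0 iotaDl count_map.
  apply: eq_in_count => r; rewrite mem_iota add0n => /andP [_ hr] /=.
  rewrite nth_rot_take ?hr ?(ltnW jn) // height_rot_take ?(ltnW hr) ?(ltnW jn) //.
  rewrite sum1 /rot_key scaled_le_lt ?hr ?ltnS ?(ltnW jn) //.
  by congr (_ && _); lia.
Qed.

Lemma perm_ranks d (T : orderType d) (K : seq T) : uniq K ->
  perm_eq [seq count (fun y => (y <= x)%O) K | x <- K] (iota 1 (size K)).
Proof.
move=> uK; set rank := fun x => count (fun y => (y <= x)%O) K.
have rank_lt x y : y \in K -> (x < y)%O -> (rank x < rank y)%N.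
  move=> yK xy; rewrite /rank -[X in (_ < X)%N]size_filter.
  rewrite -[X in (_ < X)%N](count_predC (fun z => (z <= x)%O)) count_filter.
  rewrite (@eq_count _ _ (fun z => (z <= x)%O)); last first.
    move=> z /=; apply/andP/idP => [[] //|zx].
    by split; last exact: le_trans zx (ltW xy).
  rewrite -[X in (X < _)%N]addn0 ltn_add2l -has_count; apply/hasP; exists y.
    by rewrite mem_filter lexx.
  by rewrite /= -ltNge.
have rank_inj : {in K &, injective rank}.
  move=> x y xK yK e; case: (ltgtP x y) => // xy.
  - by have := rank_lt x y yK xy; rewrite e ltnn.
  - by have := rank_lt y x xK xy; rewrite e ltnn.
have rank_uniq : uniq (map rank K) by rewrite map_inj_in_uniq.
have rank_sub : {subset map rank K <= iota 1 (size K)}.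
  move=> z /mapP [x xK ->]; rewrite mem_iota add1n ltnS count_size andbT.
  by rewrite -has_count; apply/hasP; exists x.
apply: uniq_perm => //; first exact: iota_uniq.
by case: (uniq_min_size rank_uniq rank_sub _); rewrite ?size_iota ?size_map.
Qed.

Lemma cycle_lemma C p i : \sum_(a <- p) step_dy a = 1 -> (1 <= i <= count C p)%N ->
  count (fun j => C (nth U p j) && (low_count C (rot j p) == i))
        (iota 0 (size p)) = 1%N.
Proof.
move=> sum1 hi; set n := size p.
set Cpos := [seq t <- iota 0 n | C (nth U p t)].
set K := map (rot_key p) Cpos.
have uK : uniq K.
  rewrite map_inj_in_uniq ?filter_uniq ?iota_uniq // => x y.
  rewrite !mem_filter !mem_iota !add0n => /and3P [_ _ xn] /and3P [_ _ yn].
  by apply: scaled_inj; rewrite ltnS ltnW.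
have sK : size K = count C p.
  by rewrite size_map size_filter -(count_map (nth U p)) map_nth_iota0 // take_size.
have -> : count (fun j => C (nth U p j) && (low_count C (rot j p) == i)) (iota 0 n)
        = count (pred1 i) [seq count (fun y => (y <= x)%O) K | x <- K].
  rewrite count_map /K count_map /Cpos count_filter; apply: eq_in_count => j.
  rewrite mem_iota add0n => /andP [_ jn] /=.
  rewrite low_count_rot // count_map count_filter andbC.
  by congr (_ && _); congr (_ == _); apply: eq_count => t; rewrite /= andbC.
rewrite (permP (perm_ranks uK)) count_uniq_mem ?iota_uniq //.
by rewrite mem_iota sK add1n ltnS hi.
Qed.

Lemma starts_with_rot C p j : (j < size p)%N ->
  starts_with C (rot j p) = C (nth U p j).
Proof. by move=> jp; rewrite /rot (drop_nth U jp). Qed.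

Lemma count_rotation_closed C (Q : seq (seq step)) n i :
  uniq Q ->
  (forall p, p \in Q -> size p = n /\ \sum_(a <- p) step_dy a = 1) ->
  (forall p j, p \in Q -> rot j p \in Q) ->
  (forall p, p \in Q -> 1 <= i <= count C p)%N ->
  (count (fun q => starts_with C q && (low_count C q == i)) Q * n = size Q)%N.
Proof.
move=> uQ shapeQ rotQ hi.
set good := fun q => starts_with C q && (low_count C q == i).
set rot_good := fun j p => C (nth U p j) && (low_count C (rot j p) == i).
have rot_perm j : perm_eq (map (rot j) Q) Q.
  have uQj : uniq (map (rot j) Q) by rewrite (map_inj_uniq (@rot_inj j _)).
  apply: uniq_perm => //.
  have subQ : {subset map (rot j) Q <= Q} by move=> _ /mapP [p pQ ->]; exact: rotQ.
  by case: (uniq_min_size uQj subQ _); rewrite ?size_map.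
have count_rot_good j : j \in iota 0 n -> count (rot_good j) Q = count good Q.
  rewrite mem_iota add0n => /andP [_ jn].
  rewrite -[RHS](permP (rot_perm j)) count_map; apply: eq_in_count => p pQ.
  by rewrite /rot_good /good /= starts_with_rot // (shapeQ p pQ).1.
have one_good p : p \in Q -> count (rot_good^~ p) (iota 0 n) = 1%N.
  by move=> pQ; have [<- sum1] := shapeQ p pQ; exact: cycle_lemma (hi p pQ).
rewrite -sum1_size -(eq_big_seq _ one_good).
under eq_bigr do rewrite -sum1_count big_mkcond.
rewrite exchange_big /=.
under eq_bigr do rewrite -big_mkcond sum1_count.
rewrite (eq_big_seq _ count_rot_good) big_const_seq count_predT size_iota.
by rewrite iter_addn_0 mulnC.
Qed.

Local Close Scope ring_scope.

Lemma all_wordsS n :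
  all_words n.+1 = [seq a :: w | a <- [:: U; F; D], w <- all_words n].
Proof. by []. Qed.

Lemma all_words_uniq n : uniq (all_words n).
Proof.
elim: n => [|n IHn] //; rewrite all_wordsS; apply: allpairs_uniq => //.
by move=> [a w] [b v] _ _ /= [-> ->].
Qed.

Lemma mem_all_words n p : (p \in all_words n) = (size p == n).
Proof.
elim: n p => [|n IHn] [|a q] //; rewrite all_wordsS.
- by apply/negbTE/allpairsP => -[[b w] []].
- rewrite eqSS -IHn; apply/allpairsP/idP => [[[b w] [_ wn [_ ->]]] //|qn].
  by exists (a, q); case: a.
Qed.

Lemma count_steps p : count isU p + count isF p + count isD p = size p.
Proof. by elim: p => [|a p IHp] //=; case: a; rewrite /= -IHp; lia. Qed.

Lemma count_step_class (C : step -> bool) p :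
  count C p = C U * count isU p + C F * count isF p + C D * count isD p.
Proof.
elim: p => [|a p IHp] /=; first by rewrite !muln0.
by rewrite IHp; case: a; case: (C U); case: (C F); case: (C D) => /=; lia.
Qed.

Lemma sum_step_dy p :
  (\sum_(a <- p) step_dy a)%R = ((count isU p)%:Z - (count isD p)%:Z)%R.
Proof.
elim: p => [|a p IHp]; first by rewrite big_nil.
by rewrite big_cons IHp; case: a => /=; lia.
Qed.

Definition nb_words n b c :=
  count (fun p => (count isF p == b) && (count isD p == c)) (all_words n).

Lemma nb_wordsS n b c : nb_words n.+1 b c =
  nb_words n b c + (if b is b'.+1 then nb_words n b' c else 0) +
  (if c is c'.+1 then nb_words n b c' else 0).
Proof.
rewrite /nb_words /= !count_cat !count_map /= addn0 addnA; congr (_ + _ + _).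
- case: b => [|b].
  + by rewrite (@eq_count _ _ pred0) ?count_pred0 // => p /=; rewrite add1n.
  + by apply: eq_count => p /=; rewrite add1n eqSS.
- case: c => [|c].
  + by rewrite (@eq_count _ _ pred0) ?count_pred0 // => p /=; rewrite add1n andbF.
  + by apply: eq_count => p /=; rewrite add1n eqSS.
Qed.

Lemma nb_wordsE n b c : nb_words n b c = 'C(n, b) * 'C(n - b, c).
Proof.
elim: n b c => [|n IHn] [|b] [|c] //; rewrite nb_wordsS ?IHn.
- by rewrite !bin0.
- by rewrite !bin0 !subn0 binS !mul1n addn0.
- by rewrite !bin0 !muln1 binS addn0 addnC.
- rewrite subSS binS mulnDl.
  case: (ltnP b n) => bn.
  + rewrite -(subnSK bn) binS; lia.
  + rewrite (bin_small (n := n) (m := b.+1)) ?ltnS //; lia.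
Qed.

Lemma size_Qpaths k l :
  size (Qpaths k l) = 'C(2 * k + l + 1, l) * 'C(2 * k + 1, k).
Proof.
rewrite size_filter (_ : 2 * k + 1 = 2 * k + l + 1 - l); last by lia.
rewrite -nb_wordsE; apply: eq_in_count => p.
rewrite mem_all_words => /eqP sp.
have steps : count isU p + count isF p + count isD p = 2 * k + l + 1.
  by rewrite count_steps; exact: sp.
apply/and3P/andP => [[_ dk fl] // | [/eqP fl /eqP dk]].
by split; apply/eqP; lia.
Qed.

Lemma mem_Qpaths k l p : p \in Qpaths k l ->
  [/\ size p = 2 * k + l + 1, (\sum_(a <- p) step_dy a = 1)%R &
      forall C, count C p = C U * k.+1 + C F * l + C D * k].
Proof.
rewrite mem_filter mem_all_words => /andP [/and3P [/eqP pU /eqP pD /eqP pF] /eqP sp].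
split=> // [|C]; first by rewrite sum_step_dy pU pD; lia.
by rewrite count_step_class pU pD pF.
Qed.

Lemma Qpaths_rot k l p j : p \in Qpaths k l -> rot j p \in Qpaths k l.
Proof. by rewrite !mem_filter !mem_all_words size_rot !(count_rot _ j). Qed.

Lemma nb_low_mul s k l (C : step -> bool) i :
  1 <= i <= C U * k.+1 + C F * l + C D * k ->
  nb_low s k l C i * (2 * k + l + 1) = size (Qpaths k l).
Proof.
move=> hi; rewrite /nb_low.
under eq_count do rewrite low_stepsE.
apply: count_rotation_closed => [||p j|p pQ].
- exact/filter_uniq/all_words_uniq.
- by move=> p /mem_Qpaths [].
- exact: Qpaths_rot.
- by have [_ _ ->] := mem_Qpaths pQ.
Qed.

Lemma nb_low_vertices_mul s k l i : 1 <= i <= 2 * k + l + 1 ->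
  nb_low_vertices s k l i * (2 * k + l + 1) = size (Qpaths k l).
Proof.
move=> hi; rewrite -(@nb_low_mul s k l predT i) /=; last by lia.
congr (_ * _); apply: eq_in_count => p /mem_Qpaths [sp _ _].
rewrite low_verticesE -(low_stepsE s).
by case: p sp => [/=|//]; lia.
Qed.

Local Open Scope ring_scope.

Definition nb_low_value (k l : nat) : rat :=
  (2 * k + l)`!%:R / ((k.+1)`!%:R * k`!%:R * l`!%:R).

Lemma natr_fact_neq0 n : n`!%:R != 0 :> rat.
Proof. by rewrite pnatr_eq0 -lt0n fact_gt0. Qed.

Lemma natr_bin n m : (m <= n)%N ->
  'C(n, m)%:R = n`!%:R / (m`!%:R * (n - m)`!%:R) :> rat.
Proof.
move=> mn; rewrite -(bin_fact mn) !natrM mulfK //.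
by rewrite mulf_neq0 ?natr_fact_neq0.
Qed.

Lemma natr_ge0 n : (0 : rat) <= n%:R.
Proof. exact: ler0n. Qed.

Ltac field_fact k l :=
  have := natr_ge0 k; have := natr_ge0 l; move=> ? ?;
  field; repeat (apply/andP; split);
  first [ exact: natr_fact_neq0 | done | apply/eqP => ?; lra ].

Lemma size_Qpaths_value k l :
  (size (Qpaths k l))%:R / (2 * k + l + 1)%:R = nb_low_value k l.
Proof.
rewrite size_Qpaths natrM !natr_bin; try lia.
have -> : (2 * k + l + 1 - l = (2 * k).+1)%N by lia.
have -> : (2 * k + 1 - k = k.+1)%N by lia.
have -> : (2 * k + l + 1 = (2 * k + l).+1)%N by lia.
have -> : (2 * k + 1 = (2 * k).+1)%N by lia.
by rewrite /nb_low_value !factS !natrM; field_fact k l.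
Qed.

Lemma nb_low_value_up k l :
  (k.+1%:R)^-1 * 'C(2 * k + l, 2 * k)%:R * 'C(2 * k, k)%:R = nb_low_value k l.
Proof.
rewrite !natr_bin; try lia.
have -> : (2 * k + l - 2 * k = l)%N by lia.
have -> : (2 * k - k = k)%N by lia.
by rewrite /nb_low_value (factS k) !natrM; field_fact k l.
Qed.

Lemma nb_low_value_down k l : (0 < k)%N ->
  (k%:R)^-1 * 'C(2 * k + l, 2 * k)%:R * 'C(2 * k, k.-1)%:R = nb_low_value k l.
Proof.
case: k => [|k] // _; rewrite succnK !natr_bin; try lia.
have -> : (2 * k.+1 + l - 2 * k.+1 = l)%N by lia.
have -> : (2 * k.+1 - k = k.+2)%N by lia.
rewrite /nb_low_value [k.+2`!]factS [k.+1`!]factS.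
by rewrite [(k.+2 * _)%:R]natrM [(k.+1 * _)%:R]natrM; field_fact k l.
Qed.

Lemma nb_low_value_flat k l : (0 < l)%N ->
  (l%:R)^-1 * 'C(2 * k + l, k)%:R * 'C(k + l, k.+1)%:R = nb_low_value k l.
Proof.
case: l => [|l] // _; rewrite !natr_bin; try lia.
have -> : (2 * k + l.+1 - k = k + l.+1)%N by lia.
have -> : (k + l.+1 - k.+1 = l)%N by lia.
by rewrite /nb_low_value (factS k) (factS l) !natrM; field_fact k l.
Qed.

Lemma nb_low_value_up_flat k l :
  ((k + l + 1)%:R)^-1 * 'C(2 * k + l, k)%:R * 'C(k + l + 1, k.+1)%:R =
  nb_low_value k l.
Proof.
rewrite !natr_bin; try lia.
have -> : (2 * k + l - k = k + l)%N by lia.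
have -> : (k + l + 1 - k.+1 = l)%N by lia.
rewrite addn1 /nb_low_value (factS k) (factS (k + l)) !natrM; field_fact k l.
Qed.

Lemma nb_low_value_down_flat k l : (0 < k + l)%N ->
  ((k + l)%:R)^-1 * 'C(2 * k + l, k.+1)%:R * 'C(k + l, k)%:R = nb_low_value k l.
Proof.
move=> kl; have [m def_m] : exists m, (k + l = m.+1)%N by exists (k + l).-1; lia.
rewrite !natr_bin; try lia.
have -> : (2 * k + l - k.+1 = m)%N by lia.
have -> : (k + l - k = l)%N by lia.
rewrite def_m /nb_low_value (factS k) (factS m) !natrM.
have m_ge0 := natr_ge0 m; clear kl def_m; field_fact k l.
Qed.

Lemma nb_low_value_up_down k l :
  ((2 * k + 1)%:R)^-1 * 'C(2 * k + l, 2 * k)%:R * 'C(2 * k + 1, k)%:R =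
  nb_low_value k l.
Proof.
rewrite !natr_bin; try lia.
have -> : (2 * k + l - 2 * k = l)%N by lia.
have -> : (2 * k + 1 - k = k.+1)%N by lia.
rewrite addn1 /nb_low_value (factS k) (factS (2 * k)) !natrM; field_fact k l.
Qed.

Lemma nb_low_value_vertices k l :
  ((2 * k + l + 1)%:R)^-1 * 'C(2 * k + l + 1, 2 * k + 1)%:R * 'C(2 * k + 1, k)%:R =
  nb_low_value k l.
Proof.
rewrite !natr_bin; try lia.
have -> : (2 * k + l + 1 - (2 * k + 1) = l)%N by lia.
have -> : (2 * k + 1 - k = k.+1)%N by lia.
rewrite !addn1 /nb_low_value (factS k) (factS (2 * k)) (factS (2 * k + l)) !natrM.
field_fact k l.
Qed.

Lemma natr_eq_div (a n m : nat) : (a * n)%N = m -> (0 < n)%N ->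
  a%:R = m%:R / n%:R :> rat.
Proof. by move=> <- n_gt0; rewrite natrM mulfK // pnatr_eq0 -lt0n. Qed.

Lemma nb_lowE s k l (C : step -> bool) i :
  (1 <= i <= C U * k.+1 + C F * l + C D * k)%N ->
  (nb_low s k l C i)%:R = nb_low_value k l.
Proof.
by move=> hi; rewrite (natr_eq_div (nb_low_mul s hi)) ?size_Qpaths_value ?addn1.
Qed.

Lemma nb_low_verticesE s k l i : (1 <= i <= 2 * k + l + 1)%N ->
  (nb_low_vertices s k l i)%:R = nb_low_value k l.
Proof.
by move=> hi; rewrite (natr_eq_div (nb_low_vertices_mul s hi)) ?size_Qpaths_value ?addn1.
Qed.

Theorem theorem9 (s k l : nat) (hs : (s = 1 \/ s = 2)%N) :
  (forall i : nat, (1 <= i <= k.+1)%N ->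
     (nb_low s k l isU i)%:R =
       (k.+1%:R)^-1 * ('C(2 * k + l, 2 * k))%:R * ('C(2 * k, k))%:R :> rat) /\
  (forall i : nat, (1 <= i <= k)%N ->
     (nb_low s k l isD i)%:R =
       (k%:R)^-1 * ('C(2 * k + l, 2 * k))%:R * ('C(2 * k, k.-1))%:R :> rat) /\
  (forall i : nat, (1 <= i <= l)%N ->
     (nb_low s k l isF i)%:R =
       (l%:R)^-1 * ('C(2 * k + l, k))%:R * ('C(k + l, k.+1))%:R :> rat) /\
  (forall i : nat, (1 <= i <= k + l + 1)%N ->
     (nb_low s k l (fun a => isU a || isF a) i)%:R =
       ((k + l + 1)%:R)^-1 * ('C(2 * k + l, k))%:R * ('C(k + l + 1, k.+1))%:R :> rat) /\
  (forall i : nat, (1 <= i <= k + l)%N ->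
     (nb_low s k l (fun a => isD a || isF a) i)%:R =
       ((k + l)%:R)^-1 * ('C(2 * k + l, k.+1))%:R * ('C(k + l, k))%:R :> rat) /\
  (forall i : nat, (1 <= i <= 2 * k + 1)%N ->
     (nb_low s k l (fun a => isU a || isD a) i)%:R =
       ((2 * k + 1)%:R)^-1 * ('C(2 * k + l, 2 * k))%:R * ('C(2 * k + 1, k))%:R :> rat) /\
  (forall i : nat, (1 <= i <= 2 * k + l + 1)%N ->
     (nb_low_vertices s k l i)%:R =
       ((2 * k + l + 1)%:R)^-1 * ('C(2 * k + l + 1, 2 * k + 1))%:R
         * ('C(2 * k + 1, k))%:R :> rat).
Proof.
split; [|split; [|split; [|split; [|split; [|split]]]]] => i hi.
- by rewrite nb_low_value_up nb_lowE //=; lia.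
- by rewrite nb_low_value_down ?nb_lowE //=; lia.
- by rewrite nb_low_value_flat ?nb_lowE //=; lia.
- by rewrite nb_low_value_up_flat nb_lowE //=; lia.
- by rewrite nb_low_value_down_flat ?nb_lowE //=; lia.
- by rewrite nb_low_value_up_down nb_lowE //=; lia.
- by rewrite nb_low_value_vertices nb_low_verticesE.
Qed.
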